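(* Let $m\ge2$, $s,\ell,r_1,\dots,r_m\ge1$ be integers, $k=m\ell-s$ with $k\ge\ell$, and $n=\sum_{i=1}^m(\ell+r_i)$. If $q$ is a prime power with $q>2(n-k)\binom{n-1}{k-1}$, then there exists an $[n,k,\ell;r_1,\dots,r_m]$-PMDS code over $\mathbb{F}_q$.
   Context: An $[n,k]$-MDS code over a field $\mathbb{F}$ is a linear code in $\mathbb{F}^n$ of dimension $k$ and minimum Hamming distance $n-k+1$. PMDS codes: let $\ell,m,r_1,\dots,r_m$ be positive integers, $n=\sum_{i=1}^m(r_i+\ell)$, and $C\subseteq\mathbb{F}^n$ a linear code of dimension $k<n$ with generator matrix $G=(B_1\mid\dots\mid B_m)$, $B_i\in\mathbb{F}^{k\times(r_i+\ell)}$. Then $C$ is an $[n,k,\ell;r_1,\dots,r_m]$-PMDS code if (i) for each $i$ the row space of $B_i$ is an $[r_i+\ell,\ell]$-MDS code, and (ii) for any choice of $r_i$ erased coordinates in the $i$-th block for every $i$, the code obtained from $C$ by puncturing these coordinates is an $[m\ell,k]$-MDS code. *)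

From HB Require Import structures.
From mathcomp Require Import all_boot all_order all_algebra all_field.
Set Implicit Arguments. Unset Strict Implicit. Unset Printing Implicit Defensive.
Import GRing.Theory.
Local Open Scope ring_scope.

(* Linear codes are given by generator matrices; the code is the row space. *)

Definition wt (F : fieldType) (N : nat) (v : 'rV[F]_N) : nat :=
  #|[set j : 'I_N | v 0 j != 0]|.

Definition keep_mx (F : fieldType) (N : nat) (S : {set 'I_N}) : 'M[F]_N :=
  diag_mx (\row_j (if j \in S then 1 else 0)).

(* Restriction of the code (row space of A) to the coordinates in S:
   the columns outside S are zeroed, so the row space of [restrict A S]
   is the (coordinate-wise) copy of the code punctured to S. *)
Definition restrict (F : fieldType) (K N : nat) (A : 'M[F]_(K, N))
  (S : {set 'I_N}) : 'M[F]_(K, N) := A *m keep_mx F S.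

Definition MDS_on (F : fieldType) (K N : nat) (A : 'M[F]_(K, N))
  (S : {set 'I_N}) (D : nat) : Prop :=
  let C := restrict A S in
  [/\ \rank C = D,
      (forall v : 'rV[F]_N, (v <= C)%MS -> v != 0 -> (#|S| - D + 1 <= wt v)%N)
    & exists2 v : 'rV[F]_N, (v <= C)%MS /\ v != 0 & wt v = (#|S| - D + 1)%N].

Definition block (N l m : nat) (r : 'I_m -> nat) (i : 'I_m) : {set 'I_N} :=
  [set j : 'I_N | (\sum_(i' < m | (i' < i)%N) (r i' + l) <= j)%N &&
                  (j < \sum_(i' < m | (i' <= i)%N) (r i' + l))%N].

Definition PMDS (F : fieldType) (k n l m : nat) (r : 'I_m -> nat)
  (G : 'M[F]_(k, n)) : Prop :=
  [/\ n = (\sum_(i < m) (r i + l))%N,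
      (k < n)%N,
      \rank G = k,
      (forall i : 'I_m, MDS_on G (block n l r i) l)
    & (forall E : {set 'I_n},
         (forall i : 'I_m, #|E :&: block n l r i| = r i) ->
         MDS_on G (~: E) k)].

From HB Require Import structures.
From mathcomp Require Import all_boot all_order all_algebra all_field.
From mathcomp Require Import mxabelem zify.
Set Implicit Arguments. Unset Strict Implicit. Unset Printing Implicit Defensive.
Import GRing.Theory.

(* The generator matrix is built column by column.  Call a set of coordinates
   admissible when it meets every block in at most l positions, and maintain
   the invariant that the columns of every admissible set of size at most k
   are linearly independent.  The first l positions of each block are filled
   first, with vectors of F^k; every other position of block i then receives
   a vector of the span of the first l columns of block i.  A new column c
   must avoid the span of every earlier set U of at most k - 1 columns with
   c |: U admissible: there are at most C(n-1, k-1) < q such spans, none of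
   which contains the space the column is drawn from, and a vector space
   over F_q is not the union of fewer than q proper subspaces.  At the end
   every l columns of a block form a basis of its span, so each block is an
   [r_i + l, l]-MDS code, and after erasing r_i positions per block every k
   of the remaining m l columns are admissible, hence independent, which
   makes the punctured code [m l, k]-MDS. *)

Section FinsetFacts.
Variable T : finType.

Lemma subset_of_card (A : {set T}) d : d <= #|A| ->
  exists2 Z : {set T}, Z \subset A & #|Z| = d.
Proof.
case/card_geqP => s [s_uniq s_size sA]; exists [set x in s].
  by apply/subsetP => x; rewrite inE => /sA.
by rewrite cardsE (card_uniqP s_uniq).
Qed.

Lemma subset_between (A B : {set T}) d : A \subset B -> #|A| <= d <= #|B| ->
  exists U : {set T}, [/\ A \subset U, U \subset B & #|U| = d].
Proof.
move=> sAB /andP[Ad dB].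
have [Z sZ cZ] : exists2 Z : {set T}, Z \subset B :\: A & #|Z| = d - #|A|.
  by apply: subset_of_card; rewrite cardsDS // leq_sub2r.
have dis : [disjoint A & Z].
  by move: sZ; rewrite subsetD disjoint_sym => /andP[].
exists (A :|: Z); split; first exact: subsetUl.
  by rewrite subUset sAB (subset_trans sZ) ?subsetDl.
by rewrite cardsU (disjoint_setI0 dis) cards0 subn0 cZ subnKC.
Qed.

Lemma card_bigcup_le (I : finType) (P : pred I) (B : I -> {set T}) :
  #|\bigcup_(i | P i) B i| <= \sum_(i | P i) #|B i|.
Proof.
elim/big_ind2: _ => [|a X b Y leXa leYb|//]; first by rewrite cards0.
exact: leq_trans (leq_card_setU X Y) (leq_add leXa leYb).
Qed.

Lemma card_notin_lt (A : {set T}) x : x \notin A -> #|A| < #|T|.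
Proof. by move=> xA; have := max_card (x |: A); rewrite cardsU1 xA. Qed.

Lemma set_grow_ind (Q : {set T} -> Prop) (A B : {set T}) : A \subset B -> Q A ->
    (forall (P : {set T}) c, A \subset P -> P \subset B -> c \in B :\: P -> Q P -> Q (c |: P)) ->
  Q B.
Proof.
move=> sAB QA QU; suff grow : forall P : {set T}, A \subset P -> P \subset B -> Q P by exact: grow.
move=> P; elim: {P}#|P :\: A| {-2}P (erefl #|P :\: A|) => [|d IH] P dP sAP sPB.
  suff -> : P = A by [].
  by apply/eqP; rewrite eqEsubset sAP andbT -setD_eq0 -cards_eq0 dP.
have [c cPA] : exists c, c \in P :\: A by apply/set0Pn; rewrite -card_gt0 dP.
have [cP cA] : c \in P /\ c \notin A by move: cPA; rewrite inE => /andP[].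
have sAPc : A \subset P :\ c.
  by rewrite subsetD sAP disjoint_sym disjoints1.
have sPcB : P :\ c \subset B := subset_trans (subsetDl _ _) sPB.
rewrite -(setD1K cP); apply: QU => //; first by rewrite !inE eqxx (subsetP sPB).
by apply: IH => //; move: dP; rewrite (cardsD1 c) cPA => -[]; rewrite setDDl setUC -setDDl.
Qed.

End FinsetFacts.

Section SubspaceAvoidance.
Local Open Scope ring_scope.
Variables (F : finFieldType) (k : nat).

Lemma subspace_avoidance p1 p2 (V : 'M[F]_(p1, k)) (I : finType) (A : {set I})
    (W : I -> 'M[F]_(p2, k)) :
  (#|A| < #|F|)%N -> (forall i, i \in A -> ~~ (V <= W i)%MS) ->
  exists2 y : 'rV[F]_k, (y <= V)%MS & forall i, i \in A -> ~~ (y <= W i)%MS.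
Proof.
move=> cardA VW; have [-> | [i0 i0A]] := set_0Vmem A.
  by exists 0; rewrite ?sub0mx // => i; rewrite inE.
have rank_cap i : i \in A -> (\rank (V :&: W i) < \rank V)%N.
  move=> iA; rewrite ltn_neqAle mxrankS ?capmxSl // andbT.
  apply: contra (VW i iA); rewrite (mxrank_leqif_eq (capmxSl V (W i))).2.
  by case/andP => _ /submx_trans; apply; apply: capmxSr.
have rV : (0 < \rank V)%N by apply: leq_ltn_trans (rank_cap i0 i0A).
have q0 : (0 < #|F|)%N by apply/card_gt0P; exists 0.
have : ~~ (rowg V \subset \bigcup_(i in A) rowg (V :&: W i)%MS).
  apply: contraL cardA => /subset_leq_card/leq_trans/(_ (card_bigcup_le _ _)).
  rewrite card_rowg -leqNgt => le_q_sum.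
  rewrite -(@leq_pmul2r (#|F| ^ (\rank V).-1)) ?expn_gt0 ?q0 //.
  rewrite -expnS prednK //; apply: leq_trans le_q_sum _.
  rewrite -sum_nat_const; apply: leq_sum => i iA; rewrite card_rowg leq_pexp2l //.
  by rewrite -ltnS prednK ?rank_cap.
case/subsetPn => y; rewrite mem_rowg => yV yW; exists y => // i iA.
by apply: contra yW => yWi; apply/bigcupP; exists i; rewrite // mem_rowg sub_capmx yV.
Qed.

End SubspaceAvoidance.

Section Columns.
Local Open Scope ring_scope.
Variables (F : fieldType) (k n : nat) (g : 'I_n -> 'rV[F]_k).
Implicit Types S T : {set 'I_n}.

Definition mx_of_cols : 'M[F]_(k, n) := \matrix_(t, j) g j 0 t.

Definition colsmx (S : {set 'I_n}) : 'M[F]_(n, k) :=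
  \matrix_(j, t) (if j \in S then g j 0 t else 0).

Lemma row_colsmx S j : row j (colsmx S) = if j \in S then g j else 0.
Proof. by apply/rowP => t; rewrite !mxE; case: (j \in S); rewrite ?mxE. Qed.

Lemma trmx_restrict S : (restrict mx_of_cols S)^T = colsmx S.
Proof.
apply/matrixP => j t; rewrite /restrict /keep_mx mxE mul_mx_diag !mxE.
by case: (j \in S); rewrite ?mulr1 ?mulr0.
Qed.

Lemma mem_colsmx S j : j \in S -> (g j <= colsmx S)%MS.
Proof. by move=> jS; have := row_sub j (colsmx S); rewrite row_colsmx jS. Qed.

Lemma colsmx_sub S p (W : 'M[F]_(p, k)) :
  (forall j, j \in S -> (g j <= W)%MS) -> (colsmx S <= W)%MS.
Proof.
by move=> gW; apply/row_subP => j; rewrite row_colsmx; case: ifP => [/gW|_]; rewrite ?sub0mx.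
Qed.

Lemma colsmxS S T : S \subset T -> (colsmx S <= colsmx T)%MS.
Proof. by move=> sST; apply: colsmx_sub => j /(subsetP sST); apply: mem_colsmx. Qed.

Lemma colsmx0 : colsmx set0 = 0.
Proof. by apply/matrixP => j t; rewrite !mxE inE. Qed.

Lemma colsmxU1 x S : (colsmx (x |: S) :=: g x + colsmx S)%MS.
Proof.
apply/eqmxP/andP; split; last by rewrite addsmx_sub mem_colsmx ?setU11 ?colsmxS ?subsetUr.
apply: colsmx_sub => j; rewrite in_setU1 => /predU1P[-> | jS]; first exact: addsmxSl.
exact: submx_trans (mem_colsmx jS) (addsmxSr _ _).
Qed.

Lemma rank_colsmx S : (\rank (colsmx S) <= #|S|)%N.
Proof.
apply: (@set_grow_ind _ (fun P => \rank (colsmx P) <= #|P|)%N set0); rewrite ?sub0set //.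
  by rewrite colsmx0 mxrank0.
move=> P c _ _; rewrite inE => /andP[cP _] IH; rewrite colsmxU1 cardsU1 cP.
exact: leq_trans (mxrank_adds_leqif _ _) (leq_add (rank_leq_row _) IH).
Qed.

Lemma rank_add_notin p (y : 'rV[F]_k) (A : 'M[F]_(p, k)) :
  ~~ (y <= A)%MS -> \rank (y + A)%MS = (\rank A).+1.
Proof.
move=> yA; apply/eqP; rewrite eqn_leq; apply/andP; split.
  apply: leq_trans (mxrank_adds_leqif _ _) _.
  by rewrite addnC -[(\rank A).+1]addn1 leq_add2l rank_leq_row.
rewrite (ltn_leqif (mxrank_leqif_sup (addsmxSr y A))).
by apply: contra yA; apply: submx_trans (addsmxSl y A).
Qed.

Lemma sub_kermx_tr p (x : 'rV[F]_k) (A : 'M[F]_(p, k)) :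
  (x <= kermx A^T)%MS = (A <= kermx x^T)%MS.
Proof. by rewrite !sub_kermx -trmx_eq0 trmx_mul trmxK. Qed.

Lemma mul_restrict_eq0 (x : 'rV[F]_k) S :
  (x *m restrict mx_of_cols S == 0) = (colsmx S <= kermx x^T)%MS.
Proof. by rewrite sub_kermx -trmx_restrict -trmx_mul trmx_eq0. Qed.

Lemma wt_mul_restrict (x : 'rV[F]_k) S :
  wt (x *m restrict mx_of_cols S) = #|[set j in S | ~~ (g j <= kermx x^T)%MS]|.
Proof.
apply: eq_card => j; rewrite !inE sub_kermx.
have -> : (x *m restrict mx_of_cols S) 0 j = (colsmx S *m x^T) j 0.
  by rewrite -trmx_restrict -trmx_mul [RHS]mxE.
have -> : (colsmx S *m x^T) j 0 = (row j (colsmx S) *m x^T) 0 0.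
  by rewrite -row_mul [RHS]mxE.
rewrite row_colsmx; case: (j \in S); last by rewrite mul0mx mxE eqxx.
congr negb; apply/eqP/eqP => [v0 | ->]; last by rewrite mxE.
by apply/matrixP => a b; rewrite !ord1 v0 mxE.
Qed.

End Columns.

Section MDSCriterion.
Local Open Scope ring_scope.
Variables (F : fieldType) (k n : nat) (g : 'I_n -> 'rV[F]_k).
Variables (S : {set 'I_n}) (p : nat) (W : 'M[F]_(p, k)) (D : nat).
Hypotheses (D_gt0 : (0 < D)%N) (D_le_S : (D <= #|S|)%N).
Hypotheses (colsW : forall j, j \in S -> (g j <= W)%MS) (rankW : \rank W = D).
Hypothesis spanW : forall Z : {set 'I_n}, Z \subset S -> #|Z| = D -> (W <= colsmx g Z)%MS.

Let G := mx_of_cols g.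

Lemma colsmx_eqmx : (colsmx g S :=: W)%MS.
Proof.
apply/eqmxP/andP; split; first exact: colsmx_sub.
have [Z sZS cardZ] := subset_of_card D_le_S.
exact: submx_trans (spanW sZS cardZ) (colsmxS g sZS).
Qed.

Lemma rank_restrict_cols : \rank (restrict G S) = D.
Proof. by rewrite -mxrank_tr trmx_restrict colsmx_eqmx. Qed.

Lemma wt_restrict_cols_ge v : (v <= restrict G S)%MS -> v != 0 ->
  (#|S| - D + 1 <= wt v)%N.
Proof.
case/submxP => x ->; rewrite wt_mul_restrict mul_restrict_eq0 => nz.
set N := [set j in S | _]; rewrite leqNgt; apply: contra nz => small_N.
have sNS : N \subset S by apply/subsetP => j; rewrite inE => /andP[].
have [Z sZ cardZ] : exists2 Z : {set 'I_n}, Z \subset S :\: N & #|Z| = D.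
  by apply: subset_of_card; rewrite cardsDS //; move: small_N D_le_S; lia.
have sZS : Z \subset S := subset_trans sZ (subsetDl S N).
have ZK : (colsmx g Z <= kermx x^T)%MS.
  apply: colsmx_sub => j /(subsetP sZ); rewrite !inE => /andP[jN jS].
  by move: jN; rewrite jS negbK.
by rewrite colsmx_eqmx (submx_trans (spanW sZS cardZ) ZK).
Qed.

Lemma exists_wt_restrict_cols :
  exists2 v, (v <= restrict G S)%MS /\ v != 0 & wt v = (#|S| - D + 1)%N.
Proof.
have [U sUS cardU] := @subset_of_card _ S D.-1 (leq_trans (leq_pred D) D_le_S).
have : ~~ (kermx (colsmx g U)^T <= kermx W^T)%MS.
  apply/negP => /mxrankS; rewrite !mxrank_ker !mxrank_tr rankW.
  by have := rank_colsmx g U; rewrite cardU; move: D_gt0 (rank_leq_col W); rewrite rankW; lia.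
case/row_subPn => i; set x := row i _ => xW.
have xU : (colsmx g U <= kermx x^T)%MS by rewrite -sub_kermx_tr row_sub.
have nz : x *m restrict G S != 0.
  by rewrite mul_restrict_eq0 colsmx_eqmx -sub_kermx_tr.
exists (x *m restrict G S); first by rewrite submxMl.
apply/eqP; rewrite eqn_leq wt_restrict_cols_ge ?submxMl // andbT wt_mul_restrict.
have : [set j in S | ~~ (g j <= kermx x^T)%MS] \subset S :\: U.
  apply/subsetP => j; rewrite !inE => /andP[jS jK]; rewrite jS andbT.
  by apply: contra jK => jU; apply: submx_trans (mem_colsmx g jU) xU.
move/subset_leq_card; rewrite cardsDS // cardU.
by move: D_gt0 D_le_S; lia.
Qed.

Lemma MDS_on_cols : MDS_on G S D.
Proof.
split; [exact: rank_restrict_cols | exact: wt_restrict_cols_ge | exact: exists_wt_restrict_cols].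
Qed.

End MDSCriterion.

Lemma card_interval n a b : b <= n -> #|[set j : 'I_n | a <= j < b]| = b - a.
Proof.
move=> le_bn; rewrite -sum1_card (eq_bigl (fun j : 'I_n => a <= j < b)); last first.
  by move=> j; rewrite inE.
rewrite -(big_ord_widen_cond _ (leq a) (fun _ => 1) le_bn).
by rewrite -[RHS]muln1 -sum_nat_const_nat big_geq_mkord.
Qed.

Lemma leq_sum_subpred (I : finType) (P Q : pred I) (f : I -> nat) :
  (forall i, P i -> Q i) -> \sum_(i | P i) f i <= \sum_(i | Q i) f i.
Proof.
move=> PQ; rewrite [X in (X <= _)]big_mkcond [X in (_ <= X)]big_mkcond.
by apply: leq_sum => i _; case: ifP => [/PQ -> | _].
Qed.

Section Blocks.
Variables (n l m : nat) (r : 'I_m -> nat).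
Hypothesis def_n : n = \sum_(i < m) (r i + l).
Local Notation block := (block n l r).
Implicit Types i : 'I_m.

Definition block_start i := \sum_(i' < m | i' < i) (r i' + l).
Definition block_end i := \sum_(i' < m | i' <= i) (r i' + l).

Lemma blockE i : block i = [set j : 'I_n | block_start i <= j < block_end i].
Proof. by []. Qed.

Lemma block_endE i : block_end i = block_start i + (r i + l).
Proof.
rewrite /block_end (bigD1 i) ?leqnn //= addnC; congr (_ + _).
by apply: eq_bigl => i'; rewrite ltn_neqAle val_eqE andbC.
Qed.

Lemma block_end_le i : block_end i <= n.
Proof. by rewrite def_n; apply: leq_sum_subpred. Qed.

Lemma block_end_le_start i i' : i < i' -> block_end i <= block_start i'.
Proof. by move=> lt_ii'; apply: leq_sum_subpred => j /leq_ltn_trans; apply. Qed.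

Lemma card_block i : #|block i| = r i + l.
Proof. by rewrite blockE card_interval ?block_end_le // block_endE addKn. Qed.

Lemma block_uniq j i i' : j \in block i -> j \in block i' -> i = i'.
Proof.
rewrite !blockE !inE => /andP[ge_i lt_i] /andP[ge_i' lt_i'].
case: (ltngtP i i') => [lt|lt|/val_inj //].
  by have := leq_trans (block_end_le_start lt) ge_i'; rewrite leqNgt lt_i.
by have := leq_trans (block_end_le_start lt) ge_i; rewrite leqNgt lt_i'.
Qed.

Lemma block_cover j : exists i, j \in block i.
Proof.
have m_gt0 : 0 < m.
  rewrite lt0n; apply/eqP => m0; have := ltn_ord j; rewrite {2}def_n big1 // => i _.
  by exfalso; case: i => i; rewrite m0.
have lt_last : m.-1 < m by rewrite ltn_predL.
pose ilast := Ordinal lt_last.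
have j_lt_last : j < block_end ilast.
  suff -> : block_end ilast = n by [].
  by rewrite def_n; apply: eq_bigl => i /=; rewrite -ltnS prednK ?ltn_ord.
(* The first block ending after [j] must also start at or before [j]. *)
case: (@arg_minnP _ ilast (fun i => j < block_end i) val j_lt_last) => i j_lt_i i_min.
exists i; rewrite blockE inE j_lt_i andbT.
case: i j_lt_i i_min => [[|i] lt_im] /= j_lt_i i_min; first by rewrite /block_start big_pred0.
rewrite leqNgt; apply/negP => j_lt_prev.
suff /i_min : j < block_end (Ordinal (ltnW lt_im)) by rewrite ltnn.
suff -> : block_end (Ordinal (ltnW lt_im)) = block_start (Ordinal lt_im) by [].
by apply: eq_bigl => i'; rewrite /= ltnS.
Qed.

Lemma card_blocks (A : {set 'I_n}) : #|A| = \sum_(i < m) #|A :&: block i|.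
Proof.
have cardAI i : #|A :&: block i| = \sum_(j in A) (j \in block i).
  rewrite -sum1_card big_mkcond [RHS]big_mkcond.
  by apply: eq_bigr => j _; rewrite inE; case: (j \in A).
rewrite (eq_bigr _ (fun i _ => cardAI i)) exchange_big -sum1_card /=.
apply: eq_bigr => j _; have [i ji] := block_cover j.
rewrite (bigD1 i) //= ji big1 // => i' ne_i'i; apply/eqP; rewrite eqb0.
by apply: contra ne_i'i => ji'; rewrite (block_uniq ji ji').
Qed.

Definition info_block i := [set j : 'I_n | block_start i <= j < block_start i + l].

Lemma info_block_sub i : info_block i \subset block i.
Proof.
apply/subsetP => j; rewrite blockE !inE block_endE => /andP[-> /leq_trans]; apply.
by rewrite leq_add2l leq_addl.
Qed.

Lemma card_info_block i : #|info_block i| = l.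
Proof.
rewrite card_interval ?addKn //; apply: leq_trans (block_end_le i).
by rewrite block_endE leq_add2l leq_addl.
Qed.

End Blocks.

Lemma eq_colsmx (F : fieldType) k n (g1 g2 : 'I_n -> 'rV[F]_k) (S : {set 'I_n}) :
  {in S, g1 =1 g2} -> colsmx g1 S = colsmx g2 S.
Proof. by move=> eq_g; apply/matrixP => j t; rewrite !mxE; case: ifP => // /eq_g ->. Qed.

Section ColumnExtension.
Variables (F : finFieldType) (k n : nat) (adm : pred {set 'I_n}).
Hypothesis adm_sub : forall T T' : {set 'I_n}, T \subset T' -> adm T' -> adm T.
Implicit Types (P T U : {set 'I_n}) (g : 'I_n -> 'rV[F]_k).

Definition indep_on (g : 'I_n -> 'rV[F]_k) (P : {set 'I_n}) :=
  forall T, T \subset P -> adm T -> #|T| <= k -> \rank (colsmx g T) = #|T|.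

Lemma indep_on_extend g P c p (V : 'M[F]_(p, k)) (UU : {set {set 'I_n}}) :
    c \notin P -> indep_on g P -> #|UU| < #|F| ->
    (forall U, U \in UU -> ~~ (V <= colsmx g U)%MS) ->
    (forall T, T \subset P -> adm (c |: T) -> #|T| < k -> exists2 U, U \in UU & T \subset U) ->
  exists2 y : 'rV_k, (y <= V)%MS & indep_on [eta g with c |-> y] (c |: P).
Proof.
move=> cP indep cardUU VU coverUU.
have [y yV yU] := subspace_avoidance cardUU VU; exists y => // T sTP aT cardT.
have g'E (S : {set 'I_n}) : c \notin S -> colsmx [eta g with c |-> y] S = colsmx g S.
  by move=> cS; apply: eq_colsmx => j jS /=; case: eqP => // jc; rewrite -jc jS in cS.
have [cT | cT] := boolP (c \in T); last first.
  rewrite g'E // indep //; apply/subsetP => j jT.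
  by move: (subsetP sTP j jT); rewrite in_setU1 => /predU1P[jc | //]; rewrite -jc jT in cT.
have T0P : T :\ c \subset P.
  by apply/subsetP => j; rewrite !inE => /andP[jc /(subsetP sTP)]; rewrite in_setU1 (negbTE jc).
have cardT0 : #|T| = #|T :\ c|.+1 by rewrite (cardsD1 c) cT.
have [U UUU sT0U] : exists2 U, U \in UU & T :\ c \subset U.
  by apply: coverUU; rewrite ?setD1K // -cardT0.
have yT0 : ~~ (y <= colsmx g (T :\ c))%MS.
  by apply: contra (yU U UUU) => /submx_trans; apply; apply: colsmxS.
rewrite -(setD1K cT) colsmxU1 /= eqxx g'E ?setD11 // rank_add_notin // indep //.
- by rewrite setD1K // cardT0.
- exact: adm_sub (subsetDl T [set c]) aT.
- by rewrite ltnW // -cardT0.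
Qed.

End ColumnExtension.

Section Construction.
Variables (F : finFieldType) (n l m k : nat) (r : 'I_m -> nat).
Hypothesis def_n : n = \sum_(i < m) (r i + l).
Hypotheses (l_gt0 : 0 < l) (l_le_k : l <= k) (k_lt_ml : k < m * l).
Hypothesis card_F : 'C(n - 1, k - 1) < #|F|.

Local Notation block := (block n l r).
Local Notation info := (info_block n l r).
Implicit Types (P T U : {set 'I_n}) (g : 'I_n -> 'rV[F]_k).

Definition admissible T := [forall i, #|T :&: block i| <= l].
Definition info_set := \bigcup_i info i.
Local Notation indep := (@indep_on F k n admissible).
Definition info_spanned g P :=
  forall i j, j \in P -> j \in block i -> (g j <= colsmx g (info i))%MS.

Lemma k_gt0 : 0 < k. Proof. exact: leq_trans l_gt0 l_le_k. Qed.

Lemma k_lt_n : k < n.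
Proof.
apply: leq_trans k_lt_ml _; rewrite def_n big_split /= sum_nat_const card_ord.
by rewrite mulnC leq_addl.
Qed.

Lemma admissibleS T T' : T \subset T' -> admissible T' -> admissible T.
Proof.
move=> sTT' /forallP adm_T'; apply/forallP => i.
exact: leq_trans (subset_leq_card (setSI _ sTT')) (adm_T' i).
Qed.

Lemma admissibleU1 x i T : x \in block i -> #|T :&: block i| < l -> admissible T ->
  admissible (x |: T).
Proof.
move=> xi lt_l /forallP adm_T; apply/forallP => i'; rewrite setIUl.
apply: leq_trans (leq_card_setU _ _) _.
have [<- | ne_i'i] := eqVneq i i'.
  by apply: leq_trans (leq_add (subset_leq_card (subsetIl _ _)) (leqnn _)) _; rewrite cards1.
suff -> : [set x] :&: block i' = set0 by rewrite cards0 add0n adm_T.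
apply/setP => y; rewrite in_setI in_set1 in_set0; apply/andP => -[/eqP -> xi'].
by move: ne_i'i; rewrite (block_uniq xi xi') eqxx.
Qed.

Lemma admissibleU1_lt c i U : c \in block i -> c \notin U -> admissible (c |: U) ->
  (#|U :&: block i| < l).
Proof.
move=> ci cU /forallP/(_ i); apply: leq_trans.
have ci1 : [set c] :&: block i = [set c] by apply/setIidPl; rewrite sub1set.
by rewrite setIUl ci1 cardsU1 in_setI (negbTE cU).
Qed.

Lemma mem_info_set_block x i : x \in info_set -> x \in block i -> x \in info i.
Proof.
case/bigcupP => i' _ xi' xi.
by rewrite (block_uniq xi (subsetP (info_block_sub n l r i') x xi')).
Qed.

Lemma admissible_info T : T \subset info_set -> admissible T.
Proof.
move=> sTI; apply/forallP => i.
rewrite -[X in (_ <= X)](card_info_block def_n i) subset_leq_card //.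
apply/subsetP => x; rewrite in_setI => /andP[xT]; exact: mem_info_set_block (subsetP sTI x xT).
Qed.

Lemma info_notin i T : #|T :&: block i| < l -> exists2 x, x \in info i & x \notin T.
Proof.
move=> lt_l; apply/subsetPn; apply: contraL lt_l => sIT.
rewrite -leqNgt -[X in (X <= _)](card_info_block def_n i).
by rewrite subset_leq_card // subsetI sIT info_block_sub.
Qed.

Lemma admissible_step T : admissible T -> #|T| < m * l ->
  exists x, [/\ x \in info_set, x \notin T & admissible (x |: T)].
Proof.
move=> adm_T small_T.
have [i lt_l] : exists i, (#|T :&: block i| < l).
  apply/existsP; apply: contraLR small_T; rewrite negb_exists => /forallP full.
  rewrite -leqNgt (card_blocks def_n) -[in m * l](card_ord m) -sum_nat_const.
  by apply: leq_sum => i _; rewrite leqNgt full.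
have [x xi xT] := info_notin lt_l; exists x; split => //; first by apply/bigcupP; exists i.
exact: admissibleU1 (subsetP (info_block_sub n l r i) x xi) lt_l adm_T.
Qed.

Lemma admissible_grow T d : admissible T -> #|T| <= d <= m * l ->
  exists U, [/\ T \subset U, U \subset T :|: info_set, admissible U & #|U| = d].
Proof.
move=> adm_T /andP[le_Td le_dml].
elim: {T}(d - #|T|) {-2}T (erefl (d - #|T|)) adm_T le_Td => [|e IH] T eT adm_T le_Td.
  by exists T; split; rewrite ?subsetUl //; move: eT le_Td; lia.
have lt_Td : #|T| < d by move: eT; lia.
have [x [xI xT adm_xT]] := admissible_step adm_T (leq_trans lt_Td le_dml).
have [||U [sxTU sU adm_U cardU]] := IH (x |: T) _ adm_xT; rewrite ?cardsU1 ?xT //.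
  by move: eT; lia.
exists U; split => //; first exact: subset_trans (subsetUr _ _) sxTU.
by apply: subset_trans sU _; rewrite -setUA subUset subxx sub1set in_setU xI orbT.
Qed.

Lemma bin_lt_card_F p : p < n -> 'C(p, k - 1) < #|F|.
Proof. by move=> lt_pn; apply: leq_ltn_trans card_F; rewrite leq_bin2l // -ltnS; lia. Qed.

Lemma bin_minn_lt_card_F p : p < n -> 'C(p, minn p (k - 1)) < #|F|.
Proof.
move=> lt_pn; rewrite /minn; case: (ltnP p (k - 1)) => _; last exact: bin_lt_card_F.
rewrite binn; apply: leq_trans card_F; rewrite ltnS bin_gt0.
by have := k_lt_n; lia.
Qed.

Definition completions c P d :=
  [set U : {set 'I_n} | [&& U \subset P, admissible (c |: U) & #|U| == d]].

Lemma card_completions c P d : #|completions c P d| <= 'C(#|P|, d).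
Proof.
rewrite -cards_draws subset_leq_card //; apply/subsetP => U.
by rewrite !inE => /and3P[-> _ ->].
Qed.

Lemma extend_info_column g P c : P \subset info_set -> c \in info_set -> c \notin P ->
  indep g P -> exists y, indep [eta g with c |-> y] (c |: P).
Proof.
move=> sPI cI cP indep_g; set d := minn #|P| (k - 1).
have lt_Pn : #|P| < n by have := card_notin_lt cP; rewrite card_ord.
have [|U|T sTP _ lt_Tk|y _ indep_y] := @indep_on_extend _ _ _ _ admissibleS g P c _
    (1%:M : 'M_k)%R (completions c P d) cP indep_g; last by exists y.
- exact: leq_ltn_trans (card_completions c P d) (bin_minn_lt_card_F lt_Pn).
- rewrite inE => /and3P[_ _ /eqP cardU]; apply/negP => /mxrankS.
  rewrite mxrank1 => /leq_trans/(_ (rank_colsmx g U)); rewrite cardU.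
  by have := k_gt0; lia.
have [|U [sTU sUP cardU]] := subset_between sTP (d := d).
  by rewrite leq_min subset_leq_card // geq_minl andbT; lia.
exists U => //; rewrite inE sUP cardU eqxx andbT admissible_info //.
by rewrite subUset sub1set cI (subset_trans sUP).
Qed.

Lemma info_span_not_sub g P c i U : indep g P -> info_set \subset P -> c \notin P ->
  c \in block i -> U \in completions c P (k - 1) -> ~~ (colsmx g (info i) <= colsmx g U)%MS.
Proof.
move=> indep_g sIP cP ci; rewrite inE => /and3P[sUP adm_cU /eqP cardU].
have cU : c \notin U by apply: contra cP; apply: (subsetP sUP).
have lt_l := admissibleU1_lt ci cU adm_cU.
have [x xi xU] := info_notin lt_l.
have xP : x \in P by apply: (subsetP sIP); apply/bigcupP; exists i.
have adm_U : admissible U := admissibleS (subsetUr _ _) adm_cU.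
have adm_xU := admissibleU1 (subsetP (info_block_sub n l r i) x xi) lt_l adm_U.
have rank_xU : \rank (colsmx g (x |: U)) = k.
  rewrite indep_g ?cardsU1 ?xU ?cardU ?subUset ?sub1set ?xP ?sUP //; have := k_gt0; lia.
apply/negP => sIU; have := rank_colsmx g U; rewrite cardU.
have /mxrankS : (colsmx g (x |: U) <= colsmx g U)%MS.
  apply: colsmx_sub => j; rewrite in_setU1 => /predU1P[-> | /(mem_colsmx g) //].
  exact: submx_trans (mem_colsmx g xi) sIU.
by rewrite rank_xU; have := k_gt0; lia.
Qed.

Lemma completions_cover P c T : info_set \subset P -> c \notin P -> T \subset P ->
  admissible (c |: T) -> #|T| < k -> exists2 U, U \in completions c P (k - 1) & T \subset U.
Proof.
move=> sIP cP sTP adm_cT lt_Tk.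
have cT : c \notin T by apply: contra cP; apply: (subsetP sTP).
have [|U [sTU sU adm_U cardU]] := admissible_grow adm_cT (d := k).
  by rewrite cardsU1 cT add1n lt_Tk ltnW.
have cU : c \in U by apply: (subsetP sTU); apply: setU11.
exists (U :\ c); last by rewrite subsetD1 cT andbT (subset_trans _ sTU) ?subsetUr.
have cardUc : #|U :\ c| = k - 1 by move: cardU; rewrite (cardsD1 c) cU add1n; lia.
rewrite inE setD1K // adm_U cardUc eqxx !andbT.
apply/subsetP => j; rewrite in_setD1 => /andP[jc /(subsetP sU)].
rewrite -setUA in_setU1 (negbTE jc) /= in_setU => /orP[jT | jI].
  exact: (subsetP sTP).
exact: (subsetP sIP).
Qed.

Lemma extend_redundant_column g P c : info_set \subset P -> c \notin P ->
    indep g P -> info_spanned g P ->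
  exists y, indep [eta g with c |-> y] (c |: P) /\ info_spanned [eta g with c |-> y] (c |: P).
Proof.
move=> sIP cP indep_g span_g.
have lt_Pn : #|P| < n by have := card_notin_lt cP; rewrite card_ord.
have cI : c \notin info_set by apply: contra cP; apply: (subsetP sIP).
have [i ci] := block_cover def_n c.
have [|U|T|y yV indep_y] := @indep_on_extend _ _ _ _ admissibleS g P c _
    (colsmx g (info i)) (completions c P (k - 1)) cP indep_g.
- exact: leq_ltn_trans (card_completions c P _) (bin_lt_card_F lt_Pn).
- exact: info_span_not_sub.
- exact: completions_cover.
exists y; split => // i' j jcP ji'.
rewrite (@eq_colsmx _ _ _ _ g) => [|x xi' /=]; last first.
  by case: eqP => // xc; rewrite -xc in cI; case/negP: cI; apply/bigcupP; exists i'.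
move: jcP; rewrite in_setU1 /= => /predU1P[jc | jP].
  by rewrite jc eqxx -(block_uniq ci (_ : c \in block i')) // -jc.
case: eqP => [jc | _]; first by rewrite jc in jP; case/negP: cP.
exact: span_g.
Qed.

Lemma exists_info_columns : exists g, indep g info_set.
Proof.
apply: (@set_grow_ind _ (fun P => exists g, indep g P) set0).
- exact: sub0set.
- by exists (fun _ => 0%R) => T; rewrite subset0 => /eqP -> _ _; rewrite colsmx0 mxrank0 cards0.
- move=> P c _ sPI; rewrite inE => /andP[cP cI] [g indep_g].
  by have [y] := extend_info_column sPI cI cP indep_g; exists [eta g with c |-> y].
Qed.

Lemma exists_columns : exists g, indep g setT /\ info_spanned g setT.
Proof.
apply: (@set_grow_ind _ (fun P => exists g, indep g P /\ info_spanned g P) info_set).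
- exact: subsetT.
- have [g indep_g] := exists_info_columns; exists g; split => // i j jI ji.
  exact: mem_colsmx (mem_info_set_block jI ji).
- move=> P c sIP _; rewrite inE => /andP[cP _] [g [indep_g span_g]].
  by have [y] := extend_redundant_column sIP cP indep_g span_g; exists [eta g with c |-> y].
Qed.

Lemma MDS_on_saturated g S : indep g setT -> (forall i, #|S :&: block i| = l) ->
  MDS_on (mx_of_cols g) S k.
Proof.
move=> indep_g cardS; apply: (@MDS_on_cols _ _ _ _ _ _ (1%:M)%R); rewrite ?mxrank1 ?k_gt0 //.
- rewrite (card_blocks def_n) (eq_bigr _ (fun i _ => cardS i)) sum_nat_const card_ord.
  exact: ltnW.
- by move=> j _; apply: submx1.
move=> Z sZS cardZ; apply: submx_full; rewrite /row_full indep_g ?cardZ ?subsetT //.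
apply/forallP => i; rewrite -[X in (_ <= X)](cardS i).
exact/subset_leq_card/setSI.
Qed.

Lemma block_MDS g i : indep g setT -> info_spanned g setT -> MDS_on (mx_of_cols g) (block i) l.
Proof.
move=> indep_g span_g.
have rank_indep (Z : {set 'I_n}) : Z \subset block i -> #|Z| = l -> \rank (colsmx g Z) = l.
  move=> sZi cardZ; rewrite indep_g ?cardZ ?subsetT //.
  by apply/forallP => i'; rewrite -[X in (_ <= X)]cardZ subset_leq_card ?subsetIl.
apply: (@MDS_on_cols _ _ _ _ _ _ (colsmx g (info i))) => //.
- by rewrite (card_block def_n) leq_addl.
- by move=> j ji; apply: span_g (in_setT j) ji.
- by rewrite rank_indep ?info_block_sub ?card_info_block.
move=> Z sZi cardZ.
have sZI : (colsmx g Z <= colsmx g (info i))%MS.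
  by apply: colsmx_sub => j jZ; apply: span_g (in_setT j) (subsetP sZi j jZ).
have /andP[_ -> //] : (colsmx g Z == colsmx g (info i))%MS.
by rewrite -(mxrank_leqif_eq sZI).2 !rank_indep ?info_block_sub ?card_info_block.
Qed.

Lemma info_setIblock i : info_set :&: block i = info i.
Proof.
apply/setP => x; rewrite in_setI; apply/andP/idP => [[] | xi]; first exact: mem_info_set_block.
by split; [apply/bigcupP; exists i | apply: (subsetP (info_block_sub n l r i))].
Qed.

Lemma PMDS_of_columns g : indep g setT -> info_spanned g setT -> PMDS l r (mx_of_cols g).
Proof.
move=> indep_g span_g; split => //; first exact: k_lt_n.
- have [|rank_info _ _] := @MDS_on_saturated g info_set indep_g.
    by move=> i; rewrite info_setIblock (card_info_block def_n).
  by apply/eqP; rewrite eqn_leq rank_leq_row -{1}rank_info mxrankM_maxl.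
- by move=> i; apply: block_MDS.
move=> E cardE; apply: MDS_on_saturated => // i.
have := cardsID E (block i); rewrite (card_block def_n) setIC cardE setDE setIC.
by move/eqP; rewrite eqn_add2l => /eqP.
Qed.

End Construction.

Theorem corollary21 (m s l : nat) (r : 'I_m -> nat) (k n : nat)
  (F : finFieldType) :
  (2 <= m)%N -> (1 <= s)%N -> (1 <= l)%N -> (forall i, 1 <= r i)%N ->
  k = (m * l - s)%N -> (l <= k)%N ->
  n = (\sum_(i < m) (l + r i))%N ->
  (2 * (n - k) * 'C(n - 1, k - 1) < #|F|)%N ->
  exists G : 'M[F]_(k, n), PMDS l r G.
Proof.
move=> m_ge2 s_gt0 l_gt0 _ ek l_le_k en card_F.
have def_n : n = \sum_(i < m) (r i + l) by rewrite en; apply: eq_bigr => i _; rewrite addnC.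
have k_lt_ml : k < m * l by rewrite ek; nia.
have {}card_F : 'C(n - 1, k - 1) < #|F|.
  apply: leq_ltn_trans card_F; rewrite leq_pmull // muln_gt0 subn_gt0.
  exact: k_lt_n def_n k_lt_ml.
have [g [indep_g span_g]] := exists_columns def_n l_gt0 l_le_k k_lt_ml card_F.
by exists (mx_of_cols g); apply: PMDS_of_columns.
Qed.
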